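(* Let $K$ be a field, $\mathcal P=(P,\preceq)$ a finite or countable locally finite poset and $\sim$ a bialgebra compatible equivalence relation on its nonempty intervals such that $\nabla([[a,x]]\otimes[[x,b]])=[[a,b]]$ for all $a\preceq x\preceq b$. Then the m-weak interval bialgebra $(L,\nabla,\eta;\Delta,\epsilon)$ is an m-weak Hopf algebra, and its antipode is $S=\widehat{\mu}$, where $\mu=\zeta^{\star-1}$ is the Möbius function, $\zeta$ is the constant function $1$ in the incidence algebra, and $\widehat\mu(I)=\mu(I)\,I$ for every class $I$.
   Context: Locally finite: all intervals $[a,b]$ are finite. $[[a,b]]$ is the $\sim$-class of $[a,b]$ and $L$ is the $K$-space with basis the classes. Bialgebra compatible: $[a,b]\sim[a',b']$, $[b,c]\sim[b',c']$ imply $[a,c]\sim[a',c']$; for $[a,b]\sim[a',b']$ there is a bijection $f:[a,b]\to[a',b']$ with $[a,x]\sim[a',f(x)]$, $[x,b]\sim[f(x),b']$; and $[a,a]\sim[b,b]$ for all $a,b$. On $L$: $\eta(r)=r[[a,a]]$; $\nabla(I\otimes J)=n_{I,J}[[a,b]]$ if there are $a\preceq x\preceq b$ with $I=[[a,x]]$, $J=[[x,b]]$ ($n_{I,J}$ the number of such $x$), else $0$; $\Delta([[a,b]])=\sum_{x\in[a,b]}[[a,x]]\otimes[[x,b]]$; $\epsilon([[a,b]])=\delta_{a,b}$. The incidence algebra consists of functions $\Phi$ from classes to $K$ with $(\Phi\star\Psi)([[a,b]])=\sum_{a\preceq x\preceq b}\Phi([[a,x]])\Psi([[x,b]])$ and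 unit $U([[a,b]])=\delta_{a,b}$. An m-weak bialgebra is an algebra $(L,\nabla,\eta)$ and coalgebra $(L,\Delta,\epsilon)$ with $\Delta\circ\eta=\eta\otimes\eta$, $\epsilon\circ\nabla=\epsilon\otimes\epsilon$, $\epsilon\circ\eta=\mathrm{id}_K$; it is an m-weak Hopf algebra if $\mathrm{id}_L$ has an inverse $S$ (the antipode) in the convolution algebra $(\mathrm{Hom}_K(L,L),\star,\eta\circ\epsilon)$, $f\star g=\nabla\circ(f\otimes g)\circ\Delta$. *)

From HB Require Import structures.
From mathcomp Require Import all_boot all_order all_algebra.
From mathcomp Require Import finmap.
From mathcomp.multinomials Require Import monalg.
From Stdlib Require Import ClassicalEpsilon.

Set Implicit Arguments.
Unset Strict Implicit.
Unset Printing Implicit Defensive.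

Import Order.TTheory GRing.Theory.
Local Open Scope ring_scope.

Section IntervalBialgebra.
Variables (F : fieldType) (d : Order.disp_t) (P : porderType d).

Definition locally_finite : Prop :=
  forall a b : P, exists s : seq P, forall x, (x \in s) = (a <= x <= b)%O.

Definition countable_poset : Prop := exists f : P -> nat, injective f.

(** Nonempty intervals [a,b] are represented by pairs (a,b) with a <= b. *)
Definition is_itv (p : P * P) : bool := (p.1 <= p.2)%O.

Variable sim : rel (P * P).

Definition sim_equiv : Prop :=
  [/\ (forall p, is_itv p -> sim p p),
      (forall p q, is_itv p -> is_itv q -> sim p q -> sim q p) &
      (forall p q r, is_itv p -> is_itv q -> is_itv r ->
          sim p q -> sim q r -> sim p r)].

Definition bialg_compatible : Prop :=
  [/\ sim_equiv,
      (forall a b c a' b' c' : P, (a <= b)%O -> (b <= c)%O ->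
          (a' <= b')%O -> (b' <= c')%O ->
          sim (a, b) (a', b') -> sim (b, c) (b', c') -> sim (a, c) (a', c')),
      (forall a b a' b' : P, (a <= b)%O -> (a' <= b')%O -> sim (a, b) (a', b') ->
          exists f : P -> P,
            [/\ (forall x, (a <= x <= b)%O -> (a' <= f x <= b')%O),
                {in [pred x | (a <= x <= b)%O] &, injective f},
                (forall y, (a' <= y <= b')%O -> exists2 x, (a <= x <= b)%O & f x = y) &
                (forall x, (a <= x <= b)%O -> sim (a, x) (a', f x) /\ sim (x, b) (f x, b'))]) &
      (forall a b : P, sim (a, a) (b, b))].

(** The classes [[a,b]]: each class is represented by a canonical
    representative interval chosen with [choose]. *)
Definition crep (p : P * P) : P * P := choose [pred q | is_itv q && sim p q] p.

Definition cls := {p : P * P | is_itv p && (crep p == p)}.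

(** [[a,b]] as an element of [cls] (None if not a <= b). *)
Definition clo (a b : P) : option cls := insub (crep (a, b)).

(** L = K-space with basis the classes; L (x) L and L (x) L (x) L. *)
Local Notation L := {malg F[cls]}.
Local Notation LL := {malg F[(cls * cls)%type]}.
Local Notation LLL := {malg F[(cls * cls * cls)%type]}.

Definition bas (a b : P) : L := if clo a b is Some c then << c >> else 0.

Definition itv_enum (a b : P) : seq P :=
  epsilon (inhabits [::])
    (fun s => uniq s /\ forall x, (x \in s) = (a <= x <= b)%O).

Definition tens (u v : L) : LL :=
  \sum_(i <- msupp u) \sum_(j <- msupp v) << (u@_i * v@_j) *g (i, j) >>.

Definition tens3l (w : LL) (v : L) : LLL :=
  \sum_(k <- msupp w) \sum_(j <- msupp v) << (w@_k * v@_j) *g (k.1, k.2, j) >>.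

Definition tens3r (u : L) (w : LL) : LLL :=
  \sum_(i <- msupp u) \sum_(k <- msupp w) << (u@_i * w@_k) *g (i, k.1, k.2) >>.

Definition decomp (I J : cls) (t : P * P * P) : Prop :=
  let: (a, x, b) := t in
  [/\ (a <= x)%O, (x <= b)%O, clo a x = Some I & clo x b = Some J].

Definition nablaB (I J : cls) : L :=
  match excluded_middle_informative (exists t, decomp I J t) with
  | left H =>
      let: (a, _, b) := proj1_sig (constructive_indefinite_description _ H) in
      (count (fun y => (clo a y == Some I) && (clo y b == Some J))
             (itv_enum a b))%:R *: bas a b
  | right _ => 0
  end.

Definition nabla (w : LL) : L := \sum_(k <- msupp w) w@_k *: nablaB k.1 k.2.

Definition lmul (u v : L) : L := nabla (tens u v).

Definition unitL : L := epsilon (inhabits 0) (fun u => exists a : P, u = bas a a).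

Definition eta (r : F) : L := r *: unitL.

Definition DeltaB (c : cls) : LL :=
  let: (a, b) := val c in \sum_(x <- itv_enum a b) tens (bas a x) (bas x b).

Definition Delta (u : L) : LL := \sum_(c <- msupp u) u@_c *: DeltaB c.

Definition epsB (c : cls) : F := if (val c).1 == (val c).2 then 1 else 0.

Definition eps (u : L) : F := \sum_(c <- msupp u) u@_c * epsB c.

Definition tmap (f g : L -> L) (w : LL) : LL :=
  \sum_(k <- msupp w) w@_k *: tens (f << k.1 >>) (g << k.2 >>).

Definition Delta_id (w : LL) : LLL :=
  \sum_(k <- msupp w) w@_k *: tens3l (Delta << k.1 >>) << k.2 >>.

Definition id_Delta (w : LL) : LLL :=
  \sum_(k <- msupp w) w@_k *: tens3r << k.1 >> (Delta << k.2 >>).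

(** (eps (x) id) and (id (x) eps), using K (x) L = L = L (x) K *)
Definition eps_id (w : LL) : L := \sum_(k <- msupp w) (w@_k * eps << k.1 >>) *: << k.2 >>.
Definition id_eps (w : LL) : L := \sum_(k <- msupp w) (w@_k * eps << k.2 >>) *: << k.1 >>.

Definition conv (f g : L -> L) : L -> L := fun u => nabla (tmap f g (Delta u)).

Definition mweak_bialgebra : Prop :=
  [/\
      (forall u v w : L, lmul (lmul u v) w = lmul u (lmul v w)),
      (forall (r : F) (u : L), lmul (eta r) u = r *: u /\ lmul u (eta r) = r *: u),
      (forall u : L, Delta_id (Delta u) = id_Delta (Delta u)),
      (forall u : L, eps_id (Delta u) = u /\ id_eps (Delta u) = u) &
      [/\ (forall r : F, Delta (eta r) = r *: tens (eta 1) (eta 1)),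
          (forall u v : L, eps (lmul u v) = eps u * eps v) &
          (forall r : F, eps (eta r) = r)]].

Definition is_antipode (S : L -> L) : Prop :=
  [/\ linear S,
      conv S idfun =1 (fun u => eta (eps u)) &
      conv idfun S =1 (fun u => eta (eps u))].

Definition mweak_hopf : Prop := mweak_bialgebra /\ exists S, is_antipode S.

Definition incev (Phi : cls -> F) (a b : P) : F :=
  if clo a b is Some c then Phi c else 0.

Definition inc_conv (Phi Psi : cls -> F) (c : cls) : F :=
  let: (a, b) := val c in
  \sum_(x <- itv_enum a b) incev Phi a x * incev Psi x b.

Definition zeta : cls -> F := fun _ => 1.

Definition incU : cls -> F := epsB.

Definition mobius : cls -> F :=
  epsilon (inhabits zeta)
    (fun m => inc_conv m zeta =1 incU /\ inc_conv zeta m =1 incU).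

Definition muhat (u : L) : L := \sum_(c <- msupp u) (u@_c * mobius c) *: << c >>.

End IntervalBialgebra.

Arguments locally_finite {d} P.
Arguments countable_poset {d} P.
Arguments bialg_compatible {d P} sim.
Arguments bas F {d P} sim a b.
Arguments lmul F {d P} sim u v.
Arguments mweak_hopf F {d P} sim.
Arguments is_antipode F {d P} sim S.
Arguments muhat F {d P} sim u.

(* The classes of intervals form a basis of L on which every structure map is
   given by an explicit sum over a finite interval, so each axiom is checked on
   basis vectors and extended linearly.  By hypothesis [[a,x]] [[x,b]] = [[a,b]];
   associativity then reduces to transporting a subdivision of one interval to a
   similar one along the bijection provided by bialgebra compatibility.  The
   Moebius function exists because zeta is triangular: a left and a right inverse
   are built by recursion on the size of the interval, and they coincide by
   associativity of the incidence algebra.  On a basis interval,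
   (mu^ * id) [[a,b]] = (sum_(a <= x <= b) mu [[a,x]]) [[a,b]] = delta_ab [[a,b]],
   and symmetrically for id * mu^; an arbitrary antipode S agrees with mu^ since
   S = S * (id * mu^) = (S * id) * mu^ = mu^. *)

From Pilot Require Import Defs.
From mathcomp Require Import all_boot all_order all_algebra.
From mathcomp Require Import finmap.
From mathcomp.multinomials Require Import monalg.
From Stdlib Require Import ClassicalEpsilon Classical.

Set Implicit Arguments.
Unset Strict Implicit.
Unset Printing Implicit Defensive.
Import Order.TTheory GRing.Theory.
Local Open Scope fset_scope.
Local Open Scope ring_scope.

Section LinearFor.
Variables (R : pzRingType) (U : lmodType R) (V : zmodType) (s : GRing.Scale.law R V).
Variable f : U -> V.
Hypothesis f_linear : linear_for s f.

Lemma linear0_of : f 0 = 0.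
Proof. by have := zmod_morphism_linear f_linear 0 0; rewrite !subrr. Qed.

Lemma linearN_of u : f (- u) = - f u.
Proof. by move: (zmod_morphism_linear f_linear 0 u); rewrite linear0_of !sub0r. Qed.

Lemma linearD_of u v : f (u + v) = f u + f v.
Proof. by rewrite -{1}[v]opprK (zmod_morphism_linear f_linear) linearN_of opprK. Qed.

Lemma linearZ_of c u : f (c *: u) = s c (f u).
Proof. exact: scalable_linear. Qed.

Lemma linear_sum_of (I : Type) (r : seq I) (G : I -> U) :
  f (\sum_(i <- r) G i) = \sum_(i <- r) f (G i).
Proof. exact: (big_morph f linearD_of linear0_of). Qed.

End LinearFor.

Lemma linear_comp (R : pzRingType) (U V : lmodType R) (W : zmodType) (s : R -> W -> W)
    (g : U -> V) (f : V -> W) :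
  linear g -> linear_for s f -> linear_for s (f \o g).
Proof. by move=> lg lf c u v /=; rewrite lg lf. Qed.

Section MalgExtend.
Variables (F : fieldType) (K : choiceType) (V : lmodType F).

Definition malg_extend (T : K -> V) (w : {malg F[K]}) : V :=
  \sum_(k <- msupp w) w@_k *: T k.

Lemma malg_extendEw T w (D : {fset K}) : msupp w `<=` D ->
  malg_extend T w = \sum_(k <- D) w@_k *: T k.
Proof.
move=> le; rewrite /malg_extend (big_fset_incl _ le) // => x _ /mcoeff_outdom ->.
by rewrite scale0r.
Qed.

Lemma malg_extend_linear T : linear (malg_extend T).
Proof.
move=> c u v; pose D := msupp u `|` msupp v `|` msupp (c *: u + v).
have sub_u : msupp u `<=` D by rewrite /D -fsetUA fsubsetUl.
have sub_v : msupp v `<=` D by rewrite /D fsetUC fsetUA fsubsetUr.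
rewrite (malg_extendEw T sub_u) (malg_extendEw T sub_v).
rewrite (@malg_extendEw T _ D (fsubsetUr _ _)).
rewrite scaler_sumr -big_split; apply: eq_bigr => k _ /=.
by rewrite mcoeffD mcoeffZ scalerDl scalerA.
Qed.

Lemma malg_extendU T (c : F) k : malg_extend T << c *g k >> = c *: T k.
Proof. by rewrite (malg_extendEw _ msuppU_le) big_seq_fset1 mcoeffUU. Qed.

Lemma malg_extend1 T k : malg_extend T << k >> = T k.
Proof. by rewrite malg_extendU scale1r. Qed.

Lemma malg_extend_linear_fun (W : lmodType F) (T : W -> K -> V) u :
  (forall k, linear (T^~ k)) -> linear (fun v => malg_extend (T v) u).
Proof.
move=> lT c v1 v2; rewrite /malg_extend scaler_sumr -big_split; apply: eq_bigr => k _ /=.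
by rewrite lT scalerDr !scalerA mulrC.
Qed.

End MalgExtend.

Lemma monalgUZ (F : fieldType) (K : choiceType) (c : F) (k : K) :
  << c *g k >> = c *: << k >>.
Proof. by apply/malgP => k'; rewrite mcoeffZ !mcoeffU mulr_natr. Qed.

Lemma malg_linear_ext (F : fieldType) (K : choiceType) (V : zmodType)
    (s : GRing.Scale.law F V) (f g : {malg F[K]} -> V) :
  linear_for s f -> linear_for s g -> (forall k, f << k >> = g << k >>) -> f =1 g.
Proof.
move=> lf lg fg w; rewrite (monalgE w) (linear_sum_of lf) (linear_sum_of lg).
apply: eq_bigr => k _.
by rewrite monalgUZ (linearZ_of lf) (linearZ_of lg) fg.
Qed.

Lemma uniq_size_lt (T : eqType) (s1 s2 : seq T) y : uniq s1 ->
  {subset s1 <= s2} -> y \in s2 -> y \notin s1 -> (size s1 < size s2)%N.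
Proof.
move=> u1 sub y2 y1; apply: (@uniq_leq_size _ (y :: s1)); first by rewrite /= y1.
by move=> x; rewrite inE => /predU1P[->|/sub].
Qed.

Section SizeRecursion.
Variables (T R : Type) (size_of : T -> nat) (step : (T -> R) -> T -> R).
Hypothesis step_local : forall f g t,
  (forall t', (size_of t' < size_of t)%N -> f t' = g t') -> step f t = step g t.

Lemma size_rec (g : T -> R) : exists f, forall t, f t = step f t.
Proof.
have iter_stable n m t : (size_of t < n)%N -> (n <= m)%N ->
    iter n step g t = iter m step g t.
  elim: n m t => [//|n IHn] [//|m] t ltn lenm /=.
  apply: step_local => t' lt'; apply: IHn => //.
  exact: leq_trans lt' ltn.
exists (fun t => iter (size_of t).+1 step g t) => t; rewrite iterS.
by apply: step_local => t' lt'; rewrite (iter_stable _ _ _ (ltnSn _) lt').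
Qed.

End SizeRecursion.

Section IntervalBialgebra.
Variables (d : Order.disp_t) (P : porderType d) (sim : rel (P * P)).
Hypothesis hlf : locally_finite P.
Hypothesis hsim : bialg_compatible sim.

Local Notation cls := (cls sim).
Local Notation clo := (clo sim).
Local Notation crep := (crep sim).

(** * Classes of intervals *)

Lemma sim_refl p : is_itv p -> sim p p.
Proof. by move: hsim => [[h _ _] _ _ _]; apply: h. Qed.

Lemma sim_sym p q : is_itv p -> is_itv q -> sim p q -> sim q p.
Proof. by move: hsim => [[_ h _] _ _ _]; apply: h. Qed.

Lemma sim_trans p q r : is_itv p -> is_itv q -> is_itv r ->
  sim p q -> sim q r -> sim p r.
Proof. by move: hsim => [[_ _ h] _ _ _]; apply: h. Qed.

Lemma sim_pt (a b : P) : sim (a, a) (b, b).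
Proof. by move: hsim => [_ _ _ h]; apply: h. Qed.

Lemma crepP p : is_itv p -> is_itv (crep p) && sim p (crep p).
Proof.
move=> hp; apply: (@chooseP _ [pred q | is_itv q && sim p q]) => /=.
by rewrite hp sim_refl.
Qed.

Lemma crep_sim p q : is_itv p -> is_itv q -> sim p q -> crep p = crep q.
Proof.
move=> hp hq hpq; rewrite /Defs.crep.
have e : [pred r | is_itv r && sim p r] =1 [pred r | is_itv r && sim q r].
  move=> r /=; apply/andP/andP => -[hr h]; split => //.
    exact: sim_trans (sim_sym hp hq hpq) h.
  exact: sim_trans hpq h.
rewrite (eq_choose e); apply: choose_id => /=; first by rewrite hp sim_sym.
by rewrite hq sim_refl.
Qed.

Lemma clo_itv (a b : P) : (a <= b)%O -> exists c, clo a b = Some c.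
Proof.
move=> hab; have /andP[hc hsc] := @crepP (a, b) hab.
have idc : crep (crep (a, b)) = crep (a, b).
  by apply: crep_sim => //; apply: sim_sym.
by rewrite /Defs.clo insubT ?hc ?idc ?eqxx //; eexists.
Qed.

Lemma clo_sim_val (a b : P) c : (a <= b)%O -> clo a b = Some c -> sim (a, b) (val c).
Proof.
move=> hab hc; have -> : val c = crep (a, b).
  by move: hc; rewrite /Defs.clo => hc; have := @insubK _ _ cls (crep (a, b)); rewrite hc.
by case/andP: (@crepP (a, b) hab).
Qed.

Lemma val_itv (c : cls) : ((val c).1 <= (val c).2)%O.
Proof. by case/andP: (valP c). Qed.

Lemma val_clo (c : cls) : clo (val c).1 (val c).2 = Some c.
Proof.
rewrite /Defs.clo -surjective_pairing.
by case/andP: (valP c) => _ /eqP ->; rewrite valK.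
Qed.

Lemma sim_clo_eq (a b a' b' : P) : (a <= b)%O -> (a' <= b')%O ->
  sim (a, b) (a', b') -> clo a b = clo a' b'.
Proof. by move=> h h' s; rewrite /Defs.clo (@crep_sim (a, b) (a', b')). Qed.

Lemma clo_eq_sim (a b a' b' : P) : (a <= b)%O -> (a' <= b')%O ->
  clo a b = clo a' b' -> sim (a, b) (a', b').
Proof.
move=> h h' e; have [c hc] := clo_itv h; have s := clo_sim_val h hc.
rewrite e in hc; have s' := clo_sim_val h' hc.
by apply: sim_trans s (sim_sym _ _ s') => //; apply: val_itv.
Qed.

Lemma clo_pt (a b : P) : clo a a = clo b b.
Proof. by apply: sim_clo_eq => //; apply: sim_pt. Qed.

Lemma sim_itv_bij (a b a' b' : P) : (a <= b)%O -> (a' <= b')%O ->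
  sim (a, b) (a', b') -> exists f : P -> P,
    [/\ (forall x, (a <= x <= b)%O -> (a' <= f x <= b')%O),
        {in [pred x | (a <= x <= b)%O] &, injective f},
        (forall y, (a' <= y <= b')%O -> exists2 x, (a <= x <= b)%O & f x = y) &
        (forall x, (a <= x <= b)%O -> clo a x = clo a' (f x) /\ clo x b = clo (f x) b')].
Proof.
move=> hab hab' s; move: hsim => [_ _ /(_ a b a' b' hab hab' s) [f [hin inj surj hcl]] _].
exists f; split=> // x hx; have [s1 s2] := hcl x hx.
case/andP: hx (hin x hx) => hax hxb /andP[hfa hfb].
by rewrite !(sim_clo_eq _ _ s1, sim_clo_eq _ _ s2).
Qed.

Lemma clo_ptE (a b c : P) : (a <= b)%O -> (clo a b == clo c c) = (a == b).
Proof.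
move=> hab; apply/eqP/eqP => [e|->]; last exact: clo_pt.
have [f [_ _ surj _]] := sim_itv_bij (lexx c) hab (clo_eq_sim (lexx c) hab (esym e)).
have only_c x : (c <= x <= c)%O -> x = c by move=> hx; apply/le_anti; rewrite andbC.
have ha : (a <= a <= b)%O by rewrite lexx hab.
have hb : (a <= b <= b)%O by rewrite lexx hab.
by have [x /only_c -> <-] := surj a ha; have [y /only_c -> <-] := surj b hb.
Qed.

Lemma val_eq_clo (a b : P) c : (a <= b)%O -> clo a b = Some c ->
  ((val c).1 == (val c).2) = (a == b).
Proof. by move=> hab hc; rewrite -(clo_ptE a (val_itv c)) val_clo -hc clo_ptE. Qed.

Lemma clo_split (a x b a' b' : P) : (a <= x)%O -> (x <= b)%O -> (a' <= b')%O ->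
  clo a b = clo a' b' ->
  exists x', [/\ (a' <= x')%O, (x' <= b')%O, clo a x = clo a' x' & clo x b = clo x' b'].
Proof.
move=> hax hxb hab' e; have hab := le_trans hax hxb.
have [f [hin _ _ hcl]] := sim_itv_bij hab hab' (clo_eq_sim hab hab' e).
have hx : (a <= x <= b)%O by rewrite hax hxb.
have /andP[hf1 hf2] := hin x hx; have [e1 e2] := hcl x hx.
by exists (f x).
Qed.

(** * Sums over finite intervals *)

Lemma itv_enum_spec (a b : P) :
  uniq (itv_enum a b) /\ forall x, (x \in itv_enum a b) = (a <= x <= b)%O.
Proof.
have [s hs] := hlf a b.
have ex : exists s', uniq s' /\ forall x, (x \in s') = (a <= x <= b)%O.
  by exists (undup s); split=> [|x]; rewrite ?undup_uniq ?mem_undup.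
exact: (epsilon_spec (inhabits [::]) _ ex).
Qed.

Lemma itv_enum_uniq (a b : P) : uniq (itv_enum a b).
Proof. by case: (itv_enum_spec a b). Qed.

Lemma mem_itv_enum (a b x : P) : (x \in itv_enum a b) = (a <= x <= b)%O.
Proof. by case: (itv_enum_spec a b). Qed.

Lemma big_itv_sub (V : zmodType) (G : P -> V) (a b a' b' : P) :
  (a <= a')%O -> (b' <= b)%O ->
  \sum_(x <- itv_enum a' b') G x = \sum_(x <- itv_enum a b | (a' <= x <= b')%O) G x.
Proof.
move=> ha hb; rewrite -[RHS]big_filter.
have sub : perm_eq (itv_enum a' b') [seq x <- itv_enum a b | (a' <= x <= b')%O].
  apply: uniq_perm; rewrite ?filter_uniq ?itv_enum_uniq // => x.
  rewrite mem_filter !mem_itv_enum.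
  case/boolP: (a' <= x)%O => h1 //=; case/boolP: (x <= b')%O => h2 //=.
  by rewrite (le_trans ha h1) (le_trans h2 hb).
by rewrite (perm_big _ sub).
Qed.

Lemma big_itv_exchange (V : zmodType) (G : P -> P -> V) (a b : P) :
  \sum_(x <- itv_enum a b) \sum_(y <- itv_enum a x) G y x =
  \sum_(y <- itv_enum a b) \sum_(x <- itv_enum y b) G y x.
Proof.
transitivity (\sum_(x <- itv_enum a b) \sum_(y <- itv_enum a b | (a <= y <= x)%O) G y x).
  apply: eq_big_seq => x; rewrite mem_itv_enum => /andP[_ hxb].
  exact: big_itv_sub.
under eq_bigr do rewrite big_mkcond; rewrite exchange_big.
apply: eq_big_seq => y; rewrite mem_itv_enum => /andP[hay hyb].
rewrite (big_itv_sub _ hay (lexx b)) [RHS]big_mkcond; apply: eq_big_seq => x.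
by rewrite mem_itv_enum => /andP[_ hxb]; rewrite hay hxb andbT.
Qed.

Lemma big_itv_pt (V : zmodType) (G : P -> V) (a : P) : \sum_(x <- itv_enum a a) G x = G a.
Proof.
have pt : perm_eq (itv_enum a a) [:: a].
  apply: uniq_perm; rewrite ?itv_enum_uniq // => x.
  by rewrite mem_itv_enum inE -eq_le eq_sym.
by rewrite (perm_big _ pt) big_seq1.
Qed.

Lemma big_itv_delta (V : zmodType) (G : P -> V) (a b j : P) : (a <= j <= b)%O ->
  \sum_(x <- itv_enum a b) (if x == j then G x else 0) = G j.
Proof.
move=> hj; rewrite (bigD1_seq j) ?itv_enum_uniq ?mem_itv_enum //= eqxx big1 ?addr0 //.
by move=> x /negbTE ->.
Qed.

Lemma size_itv_lt (a b a' b' : P) : (a <= a')%O -> (a' <= b')%O -> (b' <= b)%O ->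
  (a' != a) || (b' != b) -> (size (itv_enum a' b') < size (itv_enum a b))%N.
Proof.
move=> ha hab' hb ne.
have sub : {subset itv_enum a' b' <= itv_enum a b}.
  move=> x; rewrite !mem_itv_enum => /andP[h1 h2].
  by rewrite (le_trans ha h1) (le_trans h2 hb).
have hab := le_trans ha (le_trans hab' hb).
case/orP: ne => ne.
  apply: (uniq_size_lt (itv_enum_uniq _ _) sub (_ : a \in _));
    rewrite mem_itv_enum ?lexx ?hab //.
  by apply: contra ne => /andP[h _]; rewrite eq_le h ha.
apply: (uniq_size_lt (itv_enum_uniq _ _) sub (_ : b \in _));
  rewrite mem_itv_enum ?lexx ?hab //.
by apply: contra ne => /andP[_ h]; rewrite eq_le h hb.
Qed.

Lemma itv_transport (a b a' b' : P) : (a <= b)%O -> (a' <= b')%O ->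
  clo a b = clo a' b' -> exists f : P -> P,
    perm_eq (map f (itv_enum a b)) (itv_enum a' b') /\
    forall x, x \in itv_enum a b -> clo a x = clo a' (f x) /\ clo x b = clo (f x) b'.
Proof.
move=> hab hab' e.
have [f [hin hinj hsurj hcl]] := sim_itv_bij hab hab' (clo_eq_sim hab hab' e).
exists f; split=> [|x]; last by rewrite mem_itv_enum; apply: hcl.
apply: uniq_perm; rewrite ?itv_enum_uniq //.
  rewrite map_inj_in_uniq ?itv_enum_uniq // => x y hx hy.
  by apply: hinj; rewrite inE -mem_itv_enum.
move=> y; rewrite mem_itv_enum; apply/mapP/idP => [[x hx ->]|/hsurj[x hx <-]].
  by apply: hin; rewrite -mem_itv_enum.
by exists x; rewrite ?mem_itv_enum.
Qed.

Lemma big_itv_clo (V : zmodType) (h : option cls -> option cls -> V) (a b a' b' : P) :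
  (a <= b)%O -> (a' <= b')%O -> clo a b = clo a' b' ->
  \sum_(x <- itv_enum a b) h (clo a x) (clo x b) =
  \sum_(x <- itv_enum a' b') h (clo a' x) (clo x b').
Proof.
move=> hab hab' e; have [f [pe hcl]] := itv_transport hab hab' e.
rewrite -(perm_big _ pe) big_map; apply: eq_big_seq => x hx.
by have [-> ->] := hcl x hx.
Qed.

Lemma size_itv_clo (a b a' b' : P) : (a <= b)%O -> (a' <= b')%O ->
  clo a b = clo a' b' -> size (itv_enum a b) = size (itv_enum a' b').
Proof.
move=> hab hab' e; have [f [pe _]] := itv_transport hab hab' e.
by rewrite -(perm_size pe) size_map.
Qed.

(** * The incidence algebra and the Moebius function *)

Variable F : fieldType.

Local Notation zeta := (@zeta F d P sim).
Local Notation incU := (@incU F d P sim).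
Local Notation mobius := (@mobius F d P sim).
Implicit Types Phi Psi : cls -> F.

Lemma epsB_clo (a b : P) c : (a <= b)%O -> clo a b = Some c -> epsB F c = (a == b)%:R.
Proof. by move=> hab hc; rewrite /epsB (val_eq_clo hab hc); case: (a == b). Qed.

Lemma incev_incU (a b : P) : (a <= b)%O -> incev incU a b = (a == b)%:R.
Proof.
by move=> hab; have [c hc] := clo_itv hab; rewrite /incev hc /Defs.incU (epsB_clo hab hc).
Qed.

Lemma incev_zeta (a b : P) : (a <= b)%O -> incev zeta a b = 1.
Proof. by move=> hab; have [c hc] := clo_itv hab; rewrite /incev hc. Qed.

Lemma incev_val Phi (c : cls) : incev Phi (val c).1 (val c).2 = Phi c.
Proof. by rewrite /incev val_clo. Qed.

Lemma eq_incev Phi Psi (a b : P) : Phi =1 Psi -> incev Phi a b = incev Psi a b.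
Proof. by rewrite /incev => e; case: clo. Qed.

Lemma inc_convE Phi Psi (c : cls) : inc_conv Phi Psi c =
  \sum_(x <- itv_enum (val c).1 (val c).2) incev Phi (val c).1 x * incev Psi x (val c).2.
Proof. by rewrite /inc_conv; case: (val c). Qed.

Lemma incev_conv Phi Psi (a b : P) : (a <= b)%O ->
  incev (inc_conv Phi Psi) a b = \sum_(x <- itv_enum a b) incev Phi a x * incev Psi x b.
Proof.
move=> hab; have [c hc] := clo_itv hab; rewrite {1}/incev hc inc_convE.
pose h (o1 o2 : option cls) := (if o1 is Some c1 then Phi c1 else 0) *
                               (if o2 is Some c2 then Psi c2 else 0).
by apply: (big_itv_clo h (val_itv c) hab); rewrite val_clo.
Qed.

Lemma eq_inc_conv Phi1 Phi2 Psi1 Psi2 : Phi1 =1 Phi2 -> Psi1 =1 Psi2 ->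
  inc_conv Phi1 Psi1 =1 inc_conv Phi2 Psi2.
Proof.
move=> e1 e2 c; rewrite !inc_convE; apply: eq_bigr => x _.
by rewrite (eq_incev _ _ e1) (eq_incev _ _ e2).
Qed.

Lemma inc_convA Phi Psi (Chi : cls -> F) :
  inc_conv (inc_conv Phi Psi) Chi =1 inc_conv Phi (inc_conv Psi Chi).
Proof.
move=> c; rewrite !inc_convE.
transitivity (\sum_(x <- itv_enum (val c).1 (val c).2) \sum_(y <- itv_enum (val c).1 x)
    incev Phi (val c).1 y * incev Psi y x * incev Chi x (val c).2).
  apply: eq_big_seq => x; rewrite mem_itv_enum => /andP[hax _].
  by rewrite incev_conv // mulr_suml.
rewrite big_itv_exchange; apply: eq_big_seq => y; rewrite mem_itv_enum => /andP[_ hyb].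
by rewrite incev_conv // mulr_sumr; apply: eq_bigr => x _; rewrite mulrA.
Qed.

Lemma inc_conv1r Phi : inc_conv Phi incU =1 Phi.
Proof.
move=> c; have hc := val_itv c; rewrite inc_convE -(incev_val Phi c).
rewrite -(@big_itv_delta _ (incev Phi (val c).1) (val c).1 (val c).2 (val c).2) ?hc ?lexx //.
apply: eq_big_seq => x; rewrite mem_itv_enum => /andP[_ hxb].
by rewrite incev_incU //; case: eqP; rewrite ?mulr1 ?mulr0.
Qed.

Lemma inc_conv1l Phi : inc_conv incU Phi =1 Phi.
Proof.
move=> c; have hc := val_itv c; rewrite inc_convE -(incev_val Phi c).
rewrite -(@big_itv_delta _ (incev Phi ^~ (val c).2) (val c).1 (val c).2 (val c).1) ?hc ?lexx //.
apply: eq_big_seq => x; rewrite mem_itv_enum => /andP[hax _].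
by rewrite incev_incU // eq_sym; case: eqP => [->|]; rewrite ?mul1r ?mul0r.
Qed.

Lemma inc_inv_uniq Phi Psi Chi :
  inc_conv Phi Psi =1 incU -> inc_conv Psi Chi =1 incU -> Phi =1 Chi.
Proof.
move=> hl hr c; rewrite -[LHS]inc_conv1r.
rewrite (eq_inc_conv (frefl Phi) (fun c => esym (hr c))) -inc_convA.
by rewrite (eq_inc_conv hl (frefl Chi)) inc_conv1l.
Qed.

Definition itv_size (c : cls) : nat := size (itv_enum (val c).1 (val c).2).

Lemma itv_size_clo (a b : P) c : (a <= b)%O -> clo a b = Some c ->
  itv_size c = size (itv_enum a b).
Proof. by move=> hab hc; apply: size_itv_clo; rewrite ?val_clo ?val_itv. Qed.

Lemma incev_proper_eq Phi Psi (a b a' b' : P) :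
  (a <= a')%O -> (a' <= b')%O -> (b' <= b)%O -> (a' != a) || (b' != b) ->
  (forall c, (itv_size c < size (itv_enum a b))%N -> Phi c = Psi c) ->
  incev Phi a' b' = incev Psi a' b'.
Proof.
move=> ha hab' hb ne e; have [c hc] := clo_itv hab'; rewrite /incev hc; apply: e.
by rewrite (itv_size_clo hab' hc) size_itv_lt.
Qed.

Lemma zeta_linv : exists Phi, inc_conv Phi zeta =1 incU.
Proof.
pose below Phi (c : cls) := \sum_(x <- itv_enum (val c).1 (val c).2 | x != (val c).2)
  incev Phi (val c).1 x.
have [Phi hPhi] : exists Phi, forall c, Phi c = incU c - below Phi c.
  apply: (@size_rec _ _ itv_size (fun Phi c => incU c - below Phi c)) => [Phi Psi c e|];
    last exact: zeta.
  suff -> : below Phi c = below Psi c by [].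
  rewrite /below big_seq_cond [RHS]big_seq_cond; apply: eq_bigr => x.
  rewrite mem_itv_enum => /andP[/andP[hax hxb] nx].
  by apply: (incev_proper_eq (lexx _) hax hxb); rewrite ?nx ?orbT.
exists Phi => c; have hc := val_itv c.
rewrite inc_convE (bigD1_seq (val c).2) ?itv_enum_uniq ?mem_itv_enum ?lexx ?hc //=.
rewrite incev_val incev_zeta // mulr1 [Phi c]hPhi.
have -> : \sum_(x <- itv_enum (val c).1 (val c).2 | x != (val c).2)
    incev Phi (val c).1 x * incev zeta x (val c).2 = below Phi c.
  rewrite /below big_seq_cond [RHS]big_seq_cond; apply: eq_bigr => x.
  by rewrite mem_itv_enum => /andP[/andP[_ hxb] _]; rewrite incev_zeta // mulr1.
by rewrite subrK.
Qed.

Lemma zeta_rinv : exists Phi, inc_conv zeta Phi =1 incU.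
Proof.
pose above Phi (c : cls) := \sum_(x <- itv_enum (val c).1 (val c).2 | x != (val c).1)
  incev Phi x (val c).2.
have [Phi hPhi] : exists Phi, forall c, Phi c = incU c - above Phi c.
  apply: (@size_rec _ _ itv_size (fun Phi c => incU c - above Phi c)) => [Phi Psi c e|];
    last exact: zeta.
  suff -> : above Phi c = above Psi c by [].
  rewrite /above big_seq_cond [RHS]big_seq_cond; apply: eq_bigr => x.
  rewrite mem_itv_enum => /andP[/andP[hax hxb] nx].
  by apply: (incev_proper_eq hax hxb (lexx _)); rewrite ?nx.
exists Phi => c; have hc := val_itv c.
rewrite inc_convE (bigD1_seq (val c).1) ?itv_enum_uniq ?mem_itv_enum ?lexx ?hc //=.
rewrite incev_val incev_zeta // mul1r [Phi c]hPhi.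
have -> : \sum_(x <- itv_enum (val c).1 (val c).2 | x != (val c).1)
    incev zeta (val c).1 x * incev Phi x (val c).2 = above Phi c.
  rewrite /above big_seq_cond [RHS]big_seq_cond; apply: eq_bigr => x.
  by rewrite mem_itv_enum => /andP[/andP[hax _] _]; rewrite incev_zeta // mul1r.
by rewrite subrK.
Qed.

Lemma mobius_spec : inc_conv mobius zeta =1 incU /\ inc_conv zeta mobius =1 incU.
Proof.
have [Phi hl] := zeta_linv; have [Psi hr] := zeta_rinv.
have inv : exists m, inc_conv m zeta =1 incU /\ inc_conv zeta m =1 incU.
  exists Phi; split=> // c; rewrite -hr; apply: eq_inc_conv => // c'.
  exact: (inc_inv_uniq hl hr).
exact: (epsilon_spec _ _ inv).
Qed.

Lemma mobius_sum_l (a b : P) : (a <= b)%O ->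
  \sum_(x <- itv_enum a b) incev mobius a x = (a == b)%:R.
Proof.
move=> hab; rewrite -incev_incU // -(eq_incev _ _ (proj1 mobius_spec)) incev_conv //.
by apply: eq_big_seq => x; rewrite mem_itv_enum => /andP[_ hxb]; rewrite incev_zeta ?mulr1.
Qed.

Lemma mobius_sum_r (a b : P) : (a <= b)%O ->
  \sum_(x <- itv_enum a b) incev mobius x b = (a == b)%:R.
Proof.
move=> hab; rewrite -incev_incU // -(eq_incev _ _ (proj2 mobius_spec)) incev_conv //.
by apply: eq_big_seq => x; rewrite mem_itv_enum => /andP[hax _]; rewrite incev_zeta ?mul1r.
Qed.

(** * The interval bialgebra *)

Local Notation L := {malg F[cls]}.
Local Notation LL := {malg F[(cls * cls)%type]}.
Local Notation LLL := {malg F[(cls * cls * cls)%type]}.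
Local Notation bas := (bas F sim).
Local Notation lmul := (lmul F sim).
Local Notation muhat := (muhat F sim).
Local Notation unitL := (unitL F sim).
Local Notation eta := (@Defs.eta F d P sim).

(* Unifying two distinct basis vectors [<< i >>] and [<< j >>] does not terminate
   in practice, so no rewrite below is done where such a comparison could arise;
   this dictates some rewrite orders and [transitivity] steps. *)

Lemma bas_clo (a b : P) c : clo a b = Some c -> bas a b = << c >>.
Proof. by rewrite /Defs.bas => ->. Qed.

Lemma bas_val (c : cls) : bas (val c).1 (val c).2 = << c >>.
Proof. exact/bas_clo/val_clo. Qed.

Lemma nabla_linear : linear (@nabla F d P sim).
Proof. exact: (malg_extend_linear (fun k : cls * cls => nablaB F k.1 k.2)). Qed.

Lemma nablaU (i j : cls) : nabla (<< (i, j) >> : LL) = nablaB F i j.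
Proof. exact: (malg_extend1 (fun k : cls * cls => nablaB F k.1 k.2)). Qed.

Lemma tensE (u v : L) :
  tens u v = malg_extend (fun i => malg_extend (fun j => << (i, j) >>) v) u.
Proof.
rewrite /tens /malg_extend; apply: eq_bigr => i _; rewrite scaler_sumr.
by apply: eq_bigr => j _; rewrite monalgUZ scalerA.
Qed.

Lemma tens_linear_l (v : L) : linear (fun u : L => tens u v).
Proof. by move=> c u1 u2; rewrite !tensE malg_extend_linear. Qed.

Lemma tens_linear_r (u : L) : linear (@tens F d P sim u).
Proof.
have := malg_extend_linear_fun u (fun i => malg_extend_linear (fun j => << (i, j) >> : LL)).
by move=> lin c v1 v2; rewrite !tensE; apply: lin.
Qed.

Lemma tensU (i j : cls) : tens (<< i >> : L) << j >> = << (i, j) >>.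
Proof. by rewrite tensE !malg_extend1. Qed.

Lemma tens3lE (w : LL) (v : L) :
  tens3l w v = malg_extend (fun k => malg_extend (fun j => << (k.1, k.2, j) >>) v) w.
Proof.
rewrite /tens3l /malg_extend; apply: eq_bigr => k _; rewrite scaler_sumr.
by apply: eq_bigr => j _; rewrite monalgUZ scalerA.
Qed.

Lemma tens3l_linear (v : L) : linear (fun w : LL => tens3l w v).
Proof. by move=> c w1 w2; rewrite !tens3lE malg_extend_linear. Qed.

Lemma tens3l_tensU (i j k : cls) :
  tens3l (tens << i >> << j >>) (<< k >> : L) = << (i, j, k) >>.
Proof. by rewrite tensU tens3lE !malg_extend1. Qed.

Lemma tens3rE (u : L) (w : LL) :
  tens3r u w = malg_extend (fun i => malg_extend (fun k => << (i, k.1, k.2) >>) w) u.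
Proof.
rewrite /tens3r /malg_extend; apply: eq_bigr => i _; rewrite scaler_sumr.
by apply: eq_bigr => k _; rewrite monalgUZ scalerA.
Qed.

Lemma tens3r_linear (u : L) : linear (@tens3r F d P sim u).
Proof.
have := malg_extend_linear_fun u
  (fun i => malg_extend_linear (fun k : cls * cls => << (i, k.1, k.2) >> : LLL)).
by move=> lin c w1 w2; rewrite !tens3rE; apply: lin.
Qed.

Lemma tens3r_tensU (i j k : cls) :
  tens3r (<< i >> : L) (tens << j >> << k >>) = << (i, j, k) >>.
Proof. by rewrite tensU tens3rE !malg_extend1. Qed.

Lemma lmul_linear_l (v : L) : linear (lmul^~ v).
Proof. exact: linear_comp (tens_linear_l v) nabla_linear. Qed.

Lemma lmul_linear_r (u : L) : linear (lmul u).
Proof. exact: linear_comp (tens_linear_r u) nabla_linear. Qed.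

Lemma lmulU (i j : cls) : lmul << i >> << j >> = nablaB F i j.
Proof. by rewrite /Defs.lmul tensU nablaU. Qed.

Lemma Delta_linear : linear (@Delta F d P sim).
Proof. exact: malg_extend_linear. Qed.

Lemma DeltaU (c : cls) : Delta (<< c >> : L) = DeltaB F c.
Proof. exact: malg_extend1. Qed.

Lemma eps_linear : scalar (@eps F d P sim).
Proof. exact: (@malg_extend_linear _ _ F^o). Qed.

Lemma epsU (c : cls) : eps (<< c >> : L) = epsB F c.
Proof. exact: (@malg_extend1 _ _ F^o). Qed.

Lemma tmap_linear (f g : L -> L) : linear (@tmap F d P sim f g).
Proof. exact: malg_extend_linear. Qed.

Lemma tmapU (f g : L -> L) (i j : cls) :
  tmap f g (<< (i, j) >> : LL) = tens (f << i >>) (g << j >>).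
Proof. exact: (malg_extend1 (fun k : cls * cls => tens (f << k.1 >>) (g << k.2 >>))). Qed.

Lemma Delta_id_linear : linear (@Delta_id F d P sim).
Proof. exact: malg_extend_linear. Qed.

Lemma Delta_idU (i j : cls) :
  Delta_id (<< (i, j) >> : LL) = tens3l (Delta << i >>) << j >>.
Proof. exact: (malg_extend1 (fun k : cls * cls => tens3l (Delta << k.1 >>) << k.2 >>)). Qed.

Lemma id_Delta_linear : linear (@id_Delta F d P sim).
Proof. exact: malg_extend_linear. Qed.

Lemma id_DeltaU (i j : cls) :
  id_Delta (<< (i, j) >> : LL) = tens3r << i >> (Delta << j >>).
Proof. exact: (malg_extend1 (fun k : cls * cls => tens3r << k.1 >> (Delta << k.2 >>))). Qed.

Lemma eps_idE (w : LL) :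
  eps_id w = malg_extend (fun k : cls * cls => eps (<< k.1 >> : L) *: (<< k.2 >> : L)) w.
Proof. by apply: eq_bigr => k _; rewrite scalerA. Qed.

Lemma eps_id_linear : linear (@eps_id F d P sim).
Proof. by move=> c w1 w2; rewrite !eps_idE malg_extend_linear. Qed.

Lemma eps_idU (i j : cls) : eps_id (<< (i, j) >> : LL) = eps << i >> *: << j >>.
Proof. by rewrite eps_idE malg_extend1. Qed.

Lemma id_epsE (w : LL) :
  id_eps w = malg_extend (fun k : cls * cls => eps (<< k.2 >> : L) *: (<< k.1 >> : L)) w.
Proof. by apply: eq_bigr => k _; rewrite scalerA. Qed.

Lemma id_eps_linear : linear (@id_eps F d P sim).
Proof. by move=> c w1 w2; rewrite !id_epsE malg_extend_linear. Qed.

Lemma id_epsU (i j : cls) : id_eps (<< (i, j) >> : LL) = eps << j >> *: << i >>.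
Proof. by rewrite id_epsE malg_extend1. Qed.

Lemma muhatE (u : L) : muhat u = malg_extend (fun c => mobius c *: (<< c >> : L)) u.
Proof. by apply: eq_bigr => c _; rewrite scalerA. Qed.

Lemma muhat_linear : linear muhat.
Proof. by move=> a u v; rewrite !muhatE malg_extend_linear. Qed.

Lemma muhatU (c : cls) : muhat << c >> = mobius c *: << c >>.
Proof. by rewrite muhatE malg_extend1. Qed.

Lemma conv_linear (f g : L -> L) : linear (@conv F d P sim f g).
Proof. exact: linear_comp Delta_linear (linear_comp (tmap_linear f g) nabla_linear). Qed.

Lemma eta_eps_linear : linear (fun u : L => eta (eps u)).
Proof. by move=> c u v; rewrite /Defs.eta eps_linear scalerDl scalerA. Qed.

Lemma tens_bas (a x b : P) : (a <= x)%O -> (x <= b)%O -> exists i j,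
  [/\ bas a x = << i >>, bas x b = << j >> & tens (bas a x) (bas x b) = << (i, j) >>].
Proof.
move=> hax hxb; have [i hi] := clo_itv hax; have [j hj] := clo_itv hxb.
by exists i, j; rewrite (bas_clo hi) (bas_clo hj) tensU.
Qed.

Lemma Delta_bas (a b : P) : (a <= b)%O ->
  Delta (bas a b) = \sum_(x <- itv_enum a b) tens (bas a x) (bas x b).
Proof.
move=> hab; have [c hc] := clo_itv hab; rewrite (bas_clo hc) DeltaU.
have -> : DeltaB F c = \sum_(x <- itv_enum (val c).1 (val c).2)
    tens (bas (val c).1 x) (bas x (val c).2) by rewrite /DeltaB; case: (val c).
pose h (o1 o2 : option cls) := tens (if o1 is Some c1 then << c1 >> else 0 : L)
                                    (if o2 is Some c2 then << c2 >> else 0 : L).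
by apply: (big_itv_clo h (val_itv c) hab); rewrite val_clo.
Qed.

Lemma eps_bas (a b : P) : (a <= b)%O -> eps (bas a b) = (a == b)%:R.
Proof.
by move=> hab; have [c hc] := clo_itv hab; rewrite (bas_clo hc) epsU (epsB_clo hab hc).
Qed.

Lemma tens3_bas (a x y b : P) : (a <= x)%O -> (x <= y)%O -> (y <= b)%O ->
  tens3l (tens (bas a x) (bas x y)) (bas y b) = tens3r (bas a x) (tens (bas x y) (bas y b)).
Proof.
move=> hax hxy hyb; have [i hi] := clo_itv hax; have [j hj] := clo_itv hxy.
have [k hk] := clo_itv hyb.
by rewrite (bas_clo hk) (bas_clo hi) (bas_clo hj) tens3l_tensU tens3r_tensU.
Qed.

Lemma Delta_coassoc_bas (a b : P) : (a <= b)%O ->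
  Delta_id (Delta (bas a b)) = id_Delta (Delta (bas a b)).
Proof.
move=> hab; rewrite (Delta_bas hab).
rewrite (linear_sum_of Delta_id_linear) (linear_sum_of id_Delta_linear).
transitivity (\sum_(x <- itv_enum a b) \sum_(y <- itv_enum a x)
    tens3l (tens (bas a y) (bas y x)) (bas x b)).
  apply: eq_big_seq => x; rewrite mem_itv_enum => /andP[hax hxb].
  have [i [j [hi hj ->]]] := tens_bas hax hxb.
  rewrite Delta_idU -hi -hj (Delta_bas hax); exact: (linear_sum_of (tens3l_linear _)).
rewrite big_itv_exchange; apply: eq_big_seq => y; rewrite mem_itv_enum => /andP[hay hyb].
have [i [j [hi hj ->]]] := tens_bas hay hyb.
rewrite id_DeltaU -hi -hj (Delta_bas hyb) (linear_sum_of (tens3r_linear _)).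
by apply: eq_big_seq => x; rewrite mem_itv_enum => /andP[hyx hxb]; rewrite tens3_bas.
Qed.

Lemma Delta_coassoc (u : L) : Delta_id (Delta u) = id_Delta (Delta u).
Proof.
apply: (malg_linear_ext (linear_comp Delta_linear Delta_id_linear)
                        (linear_comp Delta_linear id_Delta_linear)) => c /=.
by rewrite -bas_val Delta_coassoc_bas ?val_itv.
Qed.

Lemma Delta_counit_l_bas (a b : P) : (a <= b)%O -> eps_id (Delta (bas a b)) = bas a b.
Proof.
move=> hab; rewrite (Delta_bas hab) (linear_sum_of eps_id_linear).
rewrite -[RHS](@big_itv_delta _ (bas ^~ b) a b a) ?lexx ?hab //.
apply: eq_big_seq => x; rewrite mem_itv_enum => /andP[hax hxb].
have [i [j [hi hj ->]]] := tens_bas hax hxb.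
rewrite eps_idU -hi -hj (eps_bas hax) eq_sym.
by case: eqP => [->|_]; rewrite ?scale1r ?scale0r.
Qed.

Lemma Delta_counit_r_bas (a b : P) : (a <= b)%O -> id_eps (Delta (bas a b)) = bas a b.
Proof.
move=> hab; rewrite (Delta_bas hab) (linear_sum_of id_eps_linear).
rewrite -[RHS](@big_itv_delta _ (bas a) a b b) ?lexx ?hab //.
apply: eq_big_seq => x; rewrite mem_itv_enum => /andP[hax hxb].
have [i [j [hi hj ->]]] := tens_bas hax hxb.
rewrite id_epsU -hi -hj (eps_bas hxb).
by case: eqP => [->|_]; rewrite ?scale1r ?scale0r.
Qed.

Lemma Delta_counit (u : L) : eps_id (Delta u) = u /\ id_eps (Delta u) = u.
Proof.
have lin_id : linear (@idfun L) by [].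
split; [apply: (malg_linear_ext (linear_comp Delta_linear eps_id_linear) lin_id)
       |apply: (malg_linear_ext (linear_comp Delta_linear id_eps_linear) lin_id)];
  by move=> c /=; rewrite -bas_val ?Delta_counit_l_bas ?Delta_counit_r_bas ?val_itv.
Qed.

Hypothesis hne : exists a : P, True.

Lemma unitL_bas (a : P) : unitL = bas a a.
Proof.
have [e _] := hne.
have ex : exists u : L, exists a0 : P, u = bas a0 a0 by exists (bas e e), e.
rewrite /Defs.unitL; have [a0 ->] := epsilon_spec (inhabits 0) _ ex.
by rewrite /Defs.bas (clo_pt a0 a).
Qed.

Lemma Delta_eta (r : F) : Delta (eta r) = r *: tens (eta 1) (eta 1).
Proof.
have [e _] := hne; rewrite /Defs.eta scale1r (unitL_bas e) (linearZ_of Delta_linear).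
by rewrite (Delta_bas (lexx e)) big_itv_pt.
Qed.

Lemma eps_eta (r : F) : eps (eta r) = r.
Proof.
have [e _] := hne; rewrite /Defs.eta (unitL_bas e) (linearZ_of eps_linear) eps_bas //.
by rewrite eqxx; apply: mulr1.
Qed.

Lemma eta_eps_bas (a b : P) : (a <= b)%O -> eta (eps (bas a b)) = (a == b)%:R *: bas a b.
Proof.
move=> hab; rewrite /Defs.eta (eps_bas hab); case: eqP => [<-|_]; last by rewrite !scale0r.
by rewrite (unitL_bas a).
Qed.

Hypothesis hnabla : forall a x b : P, (a <= x)%O -> (x <= b)%O ->
  lmul (bas a x) (bas x b) = bas a b.

Lemma nablaB_decomp (i j : cls) (a x b : P) :
  decomp i j (a, x, b) -> nablaB F i j = bas a b.
Proof. by case=> hax hxb hi hj; rewrite -lmulU -(bas_clo hi) -(bas_clo hj) hnabla. Qed.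

Lemma nablaB_nodecomp (i j : cls) : ~ (exists t, decomp i j t) -> nablaB F i j = 0.
Proof. by rewrite /nablaB => nd; case: excluded_middle_informative. Qed.

Lemma lmul0r (u : L) : lmul 0 u = 0.
Proof. exact: (linear0_of (lmul_linear_l u)). Qed.

Lemma lmulr0 (u : L) : lmul u 0 = 0.
Proof. exact: (linear0_of (lmul_linear_r u)). Qed.

Definition chain (i j k : cls) (t : P * P * P * P) : Prop :=
  let: (a, x, y, b) := t in
  [/\ (a <= x)%O, (x <= y)%O, (y <= b)%O &
      [/\ clo a x = Some i, clo x y = Some j & clo y b = Some k]].

Lemma lmul_nablaB_chain_l (i j k : cls) a x y b : chain i j k (a, x, y, b) ->
  lmul (nablaB F i j) << k >> = bas a b.
Proof.
case=> hax hxy hyb [hi hj hk]; have [m hm] := clo_itv (le_trans hax hxy).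
rewrite (@nablaB_decomp _ _ a x y) // (bas_clo hm) lmulU (@nablaB_decomp _ _ a y b) //.
by split=> //; apply: le_trans hxy.
Qed.

Lemma lmul_nablaB_chain_r (i j k : cls) a x y b : chain i j k (a, x, y, b) ->
  lmul << i >> (nablaB F j k) = bas a b.
Proof.
case=> hax hxy hyb [hi hj hk]; have [m hm] := clo_itv (le_trans hxy hyb).
rewrite (@nablaB_decomp _ _ x y b) // (bas_clo hm) lmulU (@nablaB_decomp _ _ a x b) //.
by split=> //; apply: le_trans hyb.
Qed.

Lemma lmul_nablaB_nochain_l (i j k : cls) : ~ (exists t, chain i j k t) ->
  lmul (nablaB F i j) << k >> = 0.
Proof.
move=> nc; case: (classic (exists t, decomp i j t)) => [[[[a x] y] dij]|nd]; last first.
  by rewrite nablaB_nodecomp // lmul0r.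
have [hax hxy hi hj] := dij; have [m hm] := clo_itv (le_trans hax hxy).
rewrite (nablaB_decomp dij) (bas_clo hm) lmulU.
case: (classic (exists t, decomp m k t)) => [[[[a' y'] b'] [hay' hyb' hm' hk]]|]; last first.
  exact: nablaB_nodecomp.
have [x' [hax' hxy' e1 e2]] := clo_split hax hxy hay' (etrans hm (esym hm')).
by case: nc; exists (a', x', y', b'); split=> //; split; rewrite -?e1 -?e2.
Qed.

Lemma lmul_nablaB_nochain_r (i j k : cls) : ~ (exists t, chain i j k t) ->
  lmul << i >> (nablaB F j k) = 0.
Proof.
move=> nc; case: (classic (exists t, decomp j k t)) => [[[[x y] b] djk]|nd]; last first.
  by rewrite (@nablaB_nodecomp j k) // lmulr0.
have [hxy hyb hj hk] := djk; have [m hm] := clo_itv (le_trans hxy hyb).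
rewrite (nablaB_decomp djk) (bas_clo hm) lmulU.
case: (classic (exists t, decomp i m t)) => [[[[a' x'] b'] [hax' hxb' hi hm']]|]; last first.
  exact: nablaB_nodecomp.
have [y' [hxy' hyb' e1 e2]] := clo_split hxy hyb hxb' (etrans hm (esym hm')).
by case: nc; exists (a', x', y', b'); split=> //; split; rewrite -?e1 -?e2.
Qed.

Lemma lmulA : associative lmul.
Proof.
move=> u v w; move: u.
apply: (malg_linear_ext (f := fun u => lmul u (lmul v w)) (g := fun u => lmul (lmul u v) w))
  => [||i]; [exact: lmul_linear_l|exact: linear_comp (lmul_linear_l v) (lmul_linear_l w)|].
move: v; apply: (malg_linear_ext (f := fun v => lmul << i >> (lmul v w))
  (g := fun v => lmul (lmul << i >> v) w)) => [||j].
- exact: linear_comp (lmul_linear_l w) (lmul_linear_r _).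
- exact: linear_comp (lmul_linear_r _) (lmul_linear_l w).
move: w; apply: (malg_linear_ext (f := lmul << i >> \o lmul << j >>)
  (g := lmul (lmul << i >> << j >>))) => [||k /=].
- exact: linear_comp (lmul_linear_r _) (lmul_linear_r _).
- exact: lmul_linear_r.
transitivity (lmul << i >> (nablaB F j k)); first by rewrite -lmulU.
transitivity (lmul (nablaB F i j) << k >>); last by rewrite -lmulU.
case: (classic (exists t, chain i j k t)) => [[[[[a x] y] b] hc]|nc].
  by rewrite (lmul_nablaB_chain_l hc) (lmul_nablaB_chain_r hc).
by rewrite lmul_nablaB_nochain_l // lmul_nablaB_nochain_r.
Qed.

Lemma lmul1l (u : L) : lmul unitL u = u.
Proof.
apply: (malg_linear_ext (lmul_linear_r _) (fun _ _ _ => erefl)) => c /=.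
by rewrite -bas_val (unitL_bas (val c).1) hnabla ?lexx ?val_itv.
Qed.

Lemma lmul1r (u : L) : lmul u unitL = u.
Proof.
apply: (malg_linear_ext (lmul_linear_l _) (fun _ _ _ => erefl)) => c /=.
by rewrite -bas_val (unitL_bas (val c).2) hnabla ?lexx ?val_itv.
Qed.

Lemma lmulZl (c : F) (u v : L) : lmul (c *: u) v = c *: lmul u v.
Proof. exact: (linearZ_of (lmul_linear_l v)). Qed.

Lemma lmulZr (c : F) (u v : L) : lmul u (c *: v) = c *: lmul u v.
Proof. exact: (linearZ_of (lmul_linear_r u)). Qed.

Lemma eps_nablaB (i j : cls) : eps (nablaB F i j) = epsB F i * epsB F j.
Proof.
case: (classic (exists t, decomp i j t)) => [[[[a x] b] dij]|nd].
  have [hax hxb hi hj] := dij.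
  rewrite (nablaB_decomp dij) eps_bas ?(le_trans hax hxb) //.
  rewrite (epsB_clo hax hi) (epsB_clo hxb hj).
  have [<-|nax] := eqVneq a x; first by rewrite mul1r.
  rewrite mul0r; case: eqP => // eab; move: hxb; rewrite -eab => hxa.
  by case/eqP: nax; apply/le_anti; rewrite hax hxa.
rewrite nablaB_nodecomp // (linear0_of eps_linear) /epsB.
have [ei|] := eqVneq (val i).1 (val i).2; last by rewrite mul0r.
have [ej|] := eqVneq (val j).1 (val j).2; last by rewrite mulr0.
case: nd; exists ((val i).1, (val i).1, (val i).1); split=> //.
- by rewrite [X in clo _ X]ei val_clo.
- by rewrite (clo_pt _ (val j).1) [X in clo _ X]ej val_clo.
Qed.

Lemma eps_lmul (u v : L) : eps (lmul u v) = eps u * eps v.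
Proof.
move: u; apply: (malg_linear_ext (s := *%R) (f := fun u => eps (lmul u v))
  (g := fun u => eps u * eps v)) => [||i].
- exact: linear_comp (lmul_linear_l v) eps_linear.
- by move=> c u1 u2; rewrite eps_linear mulrDl -(mulrA c).
move: v; apply: (malg_linear_ext (s := *%R) (f := fun v => eps (lmul << i >> v))
  (g := fun v => eps << i >> * eps v)) => [||j].
- exact: linear_comp (lmul_linear_r _) eps_linear.
- by move=> c v1 v2; rewrite eps_linear mulrDr mulrCA.
by rewrite lmulU eps_nablaB; congr (_ * _); symmetry; apply: epsU.
Qed.

Lemma interval_mweak_bialgebra : mweak_bialgebra F sim.
Proof.
split=> [u v w|r u|||]; first exact/esym/lmulA.
- by rewrite /Defs.eta lmulZl lmulZr lmul1l lmul1r.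
- exact: Delta_coassoc.
- exact: Delta_counit.
by split; [exact: Delta_eta|exact: eps_lmul|exact: eps_eta].
Qed.

(** * The antipode *)

Lemma conv_bas (f g : L -> L) (a b : P) : (a <= b)%O ->
  conv f g (bas a b) = \sum_(x <- itv_enum a b) lmul (f (bas a x)) (g (bas x b)).
Proof.
move=> hab; rewrite /conv (Delta_bas hab) (linear_sum_of (tmap_linear f g)).
rewrite (linear_sum_of nabla_linear); apply: eq_big_seq => x.
rewrite mem_itv_enum => /andP[hax hxb]; have [i [j [hi hj ->]]] := tens_bas hax hxb.
by rewrite tmapU -hi -hj.
Qed.

Lemma muhat_bas (a b : P) : (a <= b)%O -> muhat (bas a b) = incev mobius a b *: bas a b.
Proof. by move=> hab; have [c hc] := clo_itv hab; rewrite (bas_clo hc) muhatU /incev hc. Qed.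

Lemma muhat_antipode : is_antipode F sim muhat.
Proof.
split; first exact: muhat_linear.
  apply: (malg_linear_ext (conv_linear _ _) eta_eps_linear) => c.
  have hc := val_itv c; rewrite -bas_val (conv_bas _ _ hc) (eta_eps_bas hc).
  rewrite -(mobius_sum_l hc) scaler_suml; apply: eq_big_seq => x.
  by rewrite mem_itv_enum => /andP[hax hxb]; rewrite muhat_bas // lmulZl hnabla.
apply: (malg_linear_ext (conv_linear _ _) eta_eps_linear) => c.
have hc := val_itv c; rewrite -bas_val (conv_bas _ _ hc) (eta_eps_bas hc).
rewrite -(mobius_sum_r hc) scaler_suml; apply: eq_big_seq => x.
by rewrite mem_itv_enum => /andP[hax hxb]; rewrite muhat_bas // lmulZr hnabla.
Qed.

Lemma antipode_bas (S : L -> L) (a b : P) : is_antipode F sim S -> (a <= b)%O ->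
  S (bas a b) = muhat (bas a b).
Proof.
case=> _ hS _ hab.
pose X := \sum_(x <- itv_enum a b)
  incev mobius x b *: lmul (conv S idfun (bas a x)) (bas x b).
have -> : muhat (bas a b) = X.
  rewrite (muhat_bas hab).
  rewrite -(@big_itv_delta _ (fun x => incev mobius x b *: bas x b) a b a) ?lexx ?hab //.
  apply: eq_big_seq => x; rewrite mem_itv_enum => /andP[hax hxb].
  rewrite hS (eta_eps_bas hax) lmulZl hnabla // scalerA eq_sym.
  by case: eqP => [->|_]; rewrite ?mulr1 ?mulr0 ?scale0r.
have conv_bas_b x : (a <= x)%O -> (x <= b)%O ->
    lmul (conv S idfun (bas a x)) (bas x b) =
    \sum_(y <- itv_enum a x) lmul (S (bas a y)) (bas y b).
  move=> hax hxb; rewrite (conv_bas _ _ hax) (linear_sum_of (lmul_linear_l _)).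
  by apply: eq_big_seq => y; rewrite mem_itv_enum => /andP[hay hyx]; rewrite -lmulA hnabla.
symmetry; transitivity (\sum_(x <- itv_enum a b) \sum_(y <- itv_enum a x)
    incev mobius x b *: lmul (S (bas a y)) (bas y b)).
  rewrite /X; apply: eq_big_seq => x; rewrite mem_itv_enum => /andP[hax hxb].
  by rewrite conv_bas_b // scaler_sumr.
rewrite big_itv_exchange -[RHS]lmul1r (unitL_bas b).
rewrite -(@big_itv_delta _ (fun y => lmul (S (bas a y)) (bas y b)) a b b) ?hab ?lexx //.
apply: eq_big_seq => y; rewrite mem_itv_enum => /andP[hay hyb].
rewrite -scaler_suml (mobius_sum_r hyb).
by case: eqP; rewrite ?scale1r ?scale0r.
Qed.

Lemma antipode_unique (S : L -> L) : is_antipode F sim S -> S =1 muhat.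
Proof.
move=> hS; have [linS _ _] := hS.
apply: (malg_linear_ext linS muhat_linear) => c.
by rewrite -bas_val antipode_bas ?val_itv.
Qed.

End IntervalBialgebra.

Theorem corollary7p5 (F : fieldType) (d : Order.disp_t) (P : porderType d)
    (sim : rel (P * P))
    (hne : exists a : P, True)
    (hcount : countable_poset P)
    (hlf : locally_finite P)
    (hsim : bialg_compatible sim)
    (hnabla : forall a x b : P, (a <= x)%O -> (x <= b)%O ->
        lmul F sim (bas F sim a x) (bas F sim x b) = bas F sim a b) :
  mweak_hopf F sim /\ is_antipode F sim (muhat F sim) /\
  (forall S, is_antipode F sim S -> S =1 muhat F sim).
Proof.
have antipode := muhat_antipode hlf hsim hne hnabla.
split; last split=> //.
  by split; [exact: (interval_mweak_bialgebra hlf hsim hne hnabla)|exists (muhat F sim)].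
exact: (antipode_unique hlf hsim hne hnabla).
Qed.
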